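(* Let $n \geq 2$ and let $s=(s_1,s_2,\ldots,s_n)$ be a sequence of numbers from $\{0,1,2\}$. Then the cardinality of the set \[ \{(x_1,\ldots,x_n)\in \{0,1\}^n \mid x_1+x_2\neq s_1,\ x_2+x_3\neq s_2,\ \ldots,\ x_{n-1}+x_n\neq s_{n-1},\ \textrm{and } x_n+x_1\neq s_n\} \] is at most $\ell(n)$.
   Context: The Fibonacci numbers are defined for all integers by $\varphi(0)=0$, $\varphi(1)=1$ and $\varphi(n)=\varphi(n-1)+\varphi(n-2)$. The Lucas numbers are defined by $\ell(n)=\varphi(n-1)+\varphi(n+1)$ (so $\ell(1)=1,\ell(2)=3,\ell(3)=4,\ell(4)=7,\dots$). *)

From mathcomp Require Import all_boot.
Set Implicit Arguments. Unset Strict Implicit. Unset Printing Implicit Defensive.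

Fixpoint fib (n : nat) : nat :=
  match n with
  | 0 => 0
  | 1 => 1
  | (m.+1 as p).+1 => fib p + fib m
  end.

(* Lucas numbers l(n) = fib(n-1) + fib(n+1), for n >= 1 (only used for n >= 2). *)
Definition lucas (n : nat) : nat := fib n.-1 + fib n.+1.

Definition avoid_set (n : nat) (s : 'I_n -> nat) : {set {ffun 'I_n -> bool}} :=
  [set x : {ffun 'I_n -> bool} |
     [forall i : 'I_n,
        (nat_of_bool (x i) + nat_of_bool (x (ordS i)) != s i)]].

From mathcomp Require Import all_boot.
From mathcomp Require Import zify.
Set Implicit Arguments. Unset Strict Implicit. Unset Printing Implicit Defensive.

(* Reading x cyclically, the set counted is bounded by the number of closed
   walks through the 2x2 transfer matrices M_t = [a + c != t], i.e. by the
   trace of M_(s 1) ... M_(s n).  M_1 is the identity, so the 1s can be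
   dropped (and Lucas numbers increase), while exchanging the two bits swaps
   M_0 and M_2.  If only one of them remains, the trace is that of a power of
   the Fibonacci matrix, a Lucas number.  Otherwise some M_0 is cyclically
   followed by M_2; expanding the trace around that pair leaves four entries
   of the remaining product, which are bounded by Fibonacci numbers. *)

Lemma fibSS k : fib k.+2 = fib k.+1 + fib k. Proof. by []. Qed.
Arguments fib : simpl never.

Lemma leq_fibS k : fib k <= fib k.+1.
Proof. by case: k => // k; rewrite fibSS leq_addr. Qed.

Lemma leq_fib m n : m <= n -> fib m <= fib n.
Proof.
elim: n => [|n IHn]; first by rewrite leqn0 => /eqP ->.
rewrite leq_eqVlt ltnS => /orP [/eqP -> //|/IHn le_mn].
exact: leq_trans le_mn (leq_fibS n).
Qed.

Lemma leq_lucas m n : 0 < m <= n -> lucas m <= lucas n.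
Proof.
case/andP=> m_gt0 le_mn; rewrite /lucas.
by rewrite leq_add // leq_fib //; lia.
Qed.

Definition allowed (t : nat) (a c : bool) : bool := nat_of_bool a + nat_of_bool c != t.

(* [walks ts a b] is the (a, b) entry of the product of the 0/1 transfer
   matrices [allowed t] for t in ts. *)
Fixpoint walks (ts : seq nat) (a b : bool) : nat :=
  match ts with
  | [::] => a == b
  | t :: ts' => allowed t a false * walks ts' false b + allowed t a true * walks ts' true b
  end.

Definition closed_walks (ts : seq nat) : nat := walks ts false false + walks ts true true.

Fixpoint is_walk (a : bool) (ts : seq nat) (l : seq bool) (b : bool) : bool :=
  match ts, l with
  | [::], [::] => a == b
  | t :: ts', c :: l' => allowed t a c && is_walk c ts' l' b
  | _, _ => false
  end.

Fixpoint bool_seqs (m : nat) : seq (seq bool) :=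
  if m is m'.+1 then map (cons false) (bool_seqs m') ++ map (cons true) (bool_seqs m')
  else [:: [::]].

Lemma mem_bool_seqs (l : seq bool) : l \in bool_seqs (size l).
Proof.
elim: l => [|c l IHl] //=; rewrite mem_cat.
by case: c; apply/orP; [right|left]; exact: map_f.
Qed.

Lemma count_andl (T : Type) (c : bool) (p : pred T) (s : seq T) :
  count (fun x => c && p x) s = c * count p s.
Proof. by case: c; rewrite /= ?mul1n ?mul0n //; elim: s. Qed.

Lemma count_is_walk (ts : seq nat) a b :
  count (fun l => is_walk a ts l b) (bool_seqs (size ts)) = walks ts a b.
Proof.
elim: ts a => [|t ts IHts] a /=; first by rewrite addn0.
by rewrite count_cat !count_map !count_andl !IHts.
Qed.

Lemma is_walk_nth a (ts : seq nat) (l : seq bool) b : size l = size ts ->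
  (forall i, i < size ts -> allowed (nth 0 ts i) (nth false (a :: l) i) (nth false l i)) ->
  last a l = b -> is_walk a ts l b.
Proof.
elim: ts a l => [|t ts IHts] a [|c l] //=; first by move=> _ _ ->.
move=> [size_l] allowed_l last_l; rewrite (allowed_l 0) //=.
by apply: IHts => // i; apply: (allowed_l i.+1).
Qed.

Lemma avoid_set_walk n (s : 'I_n.+1 -> nat) (x : {ffun 'I_n.+1 -> bool}) :
  x \in avoid_set s ->
  is_walk (x ord0) [seq s i | i <- enum 'I_n.+1] [seq x (ordS i) | i <- enum 'I_n.+1] (x ord0).
Proof.
rewrite inE => /forallP x_avoids.
have val_nth m : m < n.+1 -> val (nth ord0 (enum 'I_n.+1) m) = m by exact: nth_enum_ord.
have nth_map_enum (T : Type) (f : 'I_n.+1 -> T) t0 m : m < n.+1 ->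
    nth t0 [seq f k | k <- enum 'I_n.+1] m = f (nth ord0 (enum 'I_n.+1) m).
  by move=> lt_mn; rewrite (nth_map ord0) // size_enum_ord.
apply: is_walk_nth; first by rewrite !size_map.
  rewrite size_map size_enum_ord => i lt_in.
  have nth_shift : nth false (x ord0 :: [seq x (ordS k) | k <- enum 'I_n.+1]) i =
                   x (nth ord0 (enum 'I_n.+1) i).
    case: i lt_in => [|i] lt_in /=; last rewrite nth_map_enum; try lia;
      congr (x _); apply: val_inj; rewrite /= !val_nth ?modn_small //; lia.
  by rewrite nth_shift !nth_map_enum //; apply: x_avoids.
rewrite -nth_last size_map size_enum_ord nth_map_enum //.
by congr (x _); apply: val_inj; rewrite /= val_nth // modnn.
Qed.

Lemma card_avoid_set_le n (s : 'I_n.+1 -> nat) :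
  #|avoid_set s| <= closed_walks [seq s i | i <- enum 'I_n.+1].
Proof.
set ts := [seq s i | i <- enum 'I_n.+1].
pose walk_of (x : {ffun 'I_n.+1 -> bool}) := [seq x (ordS i) | i <- enum 'I_n.+1].
pose closed l := is_walk false ts l false || is_walk true ts l true.
have walk_of_inj : injective walk_of.
  move=> x y /eq_in_map xy; apply/ffunP => k.
  by rewrite -(ord_predK k); apply: xy; rewrite mem_enum.
have walks_closed : {subset map walk_of (enum (avoid_set s)) <= filter closed (bool_seqs n.+1)}.
  move=> l /mapP [x]; rewrite mem_enum => /avoid_set_walk x_walk ->.
  have -> : n.+1 = size (walk_of x) by rewrite size_map size_enum_ord.
  by rewrite mem_filter mem_bool_seqs andbT /closed; case: (x ord0) x_walk => ->; rewrite ?orbT.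
have uniq_walks : uniq (map walk_of (enum (avoid_set s))) by rewrite map_inj_uniq ?enum_uniq.
have := uniq_leq_size uniq_walks walks_closed.
rewrite size_map -cardE size_filter => /leq_trans; apply.
have -> : n.+1 = size ts by rewrite size_map size_enum_ord.
by rewrite /closed_walks -!count_is_walk -count_predUI leq_addr.
Qed.

Lemma walks_cat (u v : seq nat) a b :
  walks (u ++ v) a b = walks u a false * walks v false b + walks u a true * walks v true b.
Proof.
elim: u a => [|t u IHu] a /=; first by case: a; rewrite /= ?mul0n ?mul1n ?addn0.
rewrite !IHu !mulnDr !mulnA; lia.
Qed.

Lemma closed_walks_catC (u v : seq nat) : closed_walks (u ++ v) = closed_walks (v ++ u).
Proof. rewrite /closed_walks !walks_cat; lia. Qed.

(* The constraint 1 forces equal neighbours, so its transfer matrix is the identity. *)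
Lemma walks_filter1 (ts : seq nat) a b : walks ts a b = walks [seq t <- ts | t != 1] a b.
Proof.
elim: ts a => [|t ts IHts] a //=.
case: eqP => [->|_] /=; last by rewrite !IHts.
by case: a; rewrite /allowed /= !IHts ?mul0n ?mul1n ?addn0.
Qed.

Definition flip (t : nat) : nat := 2 - t.

Definition zero_or_two (t : nat) : bool := (t == 0) || (t == 2).

Lemma walks_flip (ts : seq nat) a b : all (fun t => t <= 2) ts ->
  walks (map flip ts) (~~ a) (~~ b) = walks ts a b.
Proof.
elim: ts a => [|t ts IHts] a /=; first by case: a; case: b.
case/andP=> le_t2 /IHts IH; rewrite -(IH true) -(IH false) /=.
by move: le_t2; case: t => [|[|[|t]]] // _; case: a; rewrite /allowed /flip /=; lia.
Qed.

Lemma closed_walks_flip (ts : seq nat) : all (fun t => t <= 2) ts ->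
  closed_walks (map flip ts) = closed_walks ts.
Proof.
by move=> ts_le2; rewrite /closed_walks -(walks_flip false false ts_le2)
  -(walks_flip true true ts_le2) addnC.
Qed.

Lemma walks_fib_bounds (ts : seq nat) : all (fun t => t <= 2) ts ->
  (forall a b, walks ts a b <= fib (size ts).+1) /\
  (forall b, walks ts false b + walks ts true b <= fib (size ts).+2).
Proof.
elim: ts => [|t ts IHts] /=; first by split; [case; case | case].
case/andP=> le_t2 /IHts [entry_le col_le].
have := leq_fibS (size ts).+1; rewrite !fibSS => fib_le.
split=> [a b|b]; have := entry_le false b; have := entry_le true b; have := col_le b;
  rewrite ?fibSS; move: le_t2; case: t => [|[|[|t]]] // _; rewrite /allowed;
  try case: a; rewrite /=; lia.
Qed.

Lemma walks_nseq2 k :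
  [/\ walks (nseq k 2) false false = fib k.+1, walks (nseq k 2) false true = fib k,
      walks (nseq k 2) true false = fib k & walks (nseq k 2) true true + fib k = fib k.+1].
Proof.
elim: k => [|k [ff ft tf tt]] //=.
by rewrite /allowed /= ff ft tf !fibSS; split; lia.
Qed.

Lemma closed_walks_nseq2 k : closed_walks (nseq k.+1 2) = lucas k.+1.
Proof.
have [ff _ _ tt] := walks_nseq2 k.+1.
by rewrite /closed_walks /lucas ff succnK; move: tt; rewrite fibSS; lia.
Qed.

Lemma closed_walks_two_zero (ts : seq nat) : all (fun t => t <= 2) ts ->
  closed_walks (2 :: ts ++ [:: 0]) <= lucas (size ts).+2.
Proof.
case/walks_fib_bounds=> entry_le col_le.
have -> : closed_walks (2 :: ts ++ [:: 0]) =
    walks ts false true + walks ts true true + walks ts false false + walks ts false true.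
  by rewrite /closed_walks /= !walks_cat /= /allowed /=; lia.
have := col_le true; have := entry_le false false; have := entry_le false true.
by rewrite /lucas /= !fibSS; lia.
Qed.

Lemma zero_two_adjacent (g : seq nat) :
  2 \in g -> all zero_or_two g -> exists u v, 0 :: g = u ++ 0 :: 2 :: v.
Proof.
elim: g => [|c g IHg] //; rewrite inE /= => g2 /andP [c02 g02].
case: (c =P 2) => [->|c_neq2]; first by exists [::], g.
have c0 : c = 0 by move: c02 c_neq2; case/orP => /eqP.
have [|u [v E]] := IHg _ g02; first by move: g2; rewrite c0.
by exists (0 :: u), v; rewrite c0 E.
Qed.

(* Cyclically, some 0 is followed by a 2; rotate that pair to the two ends. *)
Lemma closed_walks_rot_two_zero (f : seq nat) :
  0 \in f -> 2 \in f -> all zero_or_two f ->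
  exists ts : seq nat, [/\ size ts + 2 = size f, all zero_or_two ts &
                 closed_walks f = closed_walks (2 :: ts ++ [:: 0])].
Proof.
case/splitPr=> p1 p2; rewrite mem_cat in_cons /= orbC -mem_cat all_cat /=.
move=> f2 /andP [p1_02 p2_02].
have [|u [v uv]] := zero_two_adjacent f2; first by rewrite all_cat p1_02 p2_02.
have size_uv : size (v ++ u) + 2 = size (p1 ++ 0 :: p2).
  by have := congr1 size uv; rewrite /= !size_cat /=; lia.
exists (v ++ u); split => //.
  have : all zero_or_two (0 :: p2 ++ p1) by rewrite /= all_cat p1_02 p2_02.
  by rewrite uv !all_cat /= andbC.
rewrite closed_walks_catC /= uv closed_walks_catC /= -(cat1s 0).
by rewrite closed_walks_catC.
Qed.

Lemma closed_walks_le_lucas (f : seq nat) n : 2 <= n -> size f <= n ->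
  all zero_or_two f -> closed_walks f <= lucas n.
Proof.
move=> n_ge2 size_f f02.
have le2 ts : all zero_or_two ts -> all (fun t => t <= 2) ts.
  by apply: sub_all => t /orP [] /eqP ->.
have nseq2_le k : k <= n -> closed_walks (nseq k 2) <= lucas n.
  case: k => [|k] le_kn; first exact: leq_trans _ (leq_lucas (m := 2) _).
  by rewrite closed_walks_nseq2 leq_lucas.
have [/andP [f0 f2]|] := boolP ((0 \in f) && (2 \in f)).
  have [ts [size_ts ts02 ->]] := closed_walks_rot_two_zero f0 f2 f02.
  apply: leq_trans (closed_walks_two_zero (le2 _ ts02)) (leq_lucas _).
  by move: size_ts size_f; lia.
have constant_f t : (t == 0) || (t == 2) -> t \notin f -> f = nseq (size f) (2 - t).
  move=> t02 f_t; apply/all_pred1P/allP => c fc.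
  case/orP: (allP f02 c fc) => /eqP c_val; subst c;
    by case/orP: t02 f_t => /eqP ->; rewrite ?fc.
rewrite negb_and => /orP [/(constant_f 0 erefl) ->|/(constant_f 2 erefl) f_0].
  exact: nseq2_le.
rewrite -closed_walks_flip; last by rewrite le2.
by rewrite f_0 map_nseq nseq2_le.
Qed.

Theorem lemma3p1 (n : nat) (s : 'I_n -> nat) :
  2 <= n -> (forall i, s i <= 2) -> #|avoid_set s| <= lucas n.
Proof.
case: n s => [|n] s // n_ge2 s_le2.
apply: leq_trans (card_avoid_set_le s) _.
set ts := [seq s i | i <- enum 'I_n.+1].
rewrite /closed_walks !(walks_filter1 ts) -/(closed_walks _).
apply: closed_walks_le_lucas => //.
  by rewrite size_filter (leq_trans (count_size _ _)) // size_map size_enum_ord.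
apply/allP => t; rewrite mem_filter => /andP [t_neq1 /mapP [i _ t_val]].
by move: t_neq1 (s_le2 i); rewrite -t_val; case: t {t_val} => [|[|[|t]]].
Qed.
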